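(* Let $G$ be a finite group of $F$-class $1$ and $F$-rank $\ell$, and let $H$ be the largest solvable normal subgroup of $G$. Then: (a) $F(G)$ is a direct product of elementary abelian groups and $|F(G)| = \ell$; (b) $H$ is solvable of $F$-class $1$ and $F$-rank $\ell$, and $F(G) = F(H)$; (c) $C_H(F(H)) = F(H)$.
   Context: For a finite group $G$, $F(G)$ denotes its Fitting subgroup. The $F$-central series of $G$ is defined by $\nu_0(G)=F(G)$ and, for $i\ge 0$, $\nu_{i+1}(G)$ is the smallest normal subgroup $N$ of $F(G)$ with $N\le \nu_i(G)$ such that $\nu_i(G)/N$ is centralized by $F(G)$ and is a direct product of elementary abelian groups. The $F$-class of $G$ is the least integer $c\ge 0$ with $\nu_c(G)=\{1\}$; if the $F$-class is at least $1$, the $F$-rank of $G$ is $|\nu_0(G)/\nu_1(G)|$. *)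

From mathcomp Require Import all_boot all_fingroup all_solvable.
Set Implicit Arguments. Unset Strict Implicit. Unset Printing Implicit Defensive.
Import GroupScope.

Section FCentral.
Variable gT : finGroupType.

Definition elem_prod (A : {set gT}) : bool :=
  abelian A && all (fun p => p.-abelem 'O_p(A)) (primes #|A|).

Definition elem_prod_q (N : {set gT}) (A : {set coset_of N}) : bool :=
  abelian A && all (fun p => p.-abelem 'O_p(A)) (primes #|A|).

Definition nu_ok (F M N : {group gT}) : bool :=
  [&& N <| F, N \subset M, [~: M, F] \subset N & elem_prod_q (M / N)].

(* The F-central series nu_i(G); nu_{i+1} is the smallest admissible N,
   i.e. the intersection of all admissible N. *)
Fixpoint nu (G : {group gT}) (i : nat) : {group gT} :=
  match i with
  | 0 => 'F(G)%G
  | i'.+1 => (\bigcap_(N : {group gT} | nu_ok 'F(G)%G (nu G i') N) N)%G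
  end.

Definition Fclass (G : {group gT}) (c : nat) : Prop :=
  nu G c = 1%G /\ (forall j, j < c -> nu G j != 1%G).

Definition Frank (G : {group gT}) : nat := #|nu G 0 : nu G 1|.

End FCentral.

From mathcomp Require Import all_boot all_fingroup all_solvable.
Import GroupScope.
Set Implicit Arguments. Unset Strict Implicit.

(* The second term nu_1(G) of the F-central series is the intersection of the
   admissible subgroups N of F(G): those normal in F(G) with [F(G), F(G)] <= N
   and F(G)/N a direct product of elementary abelian groups.  Each such N
   contains the commutator subgroup of F(G) and the p-th powers of the
   p-elements of F(G); hence, when nu_1(G) = 1 (F-class 1), F(G) is abelian
   with elementary abelian primary components, and |F(G)| is the F-rank.

   The series only depends on the Fitting subgroup, and the largest solvable
   normal subgroup H of G contains F(G), so F(H) = F(G) and H inherits the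
   F-class and F-rank.  Finally the classical fact C_H(F(H)) <= F(H) for
   solvable H, together with F(H) abelian, gives C_H(F(H)) = F(H). *)

Section ElementaryProducts.
Variable gT : finGroupType.

Lemma elem_prod_pelt_expn (A : {group gT}) (p : nat) (y : gT) :
  prime p -> elem_prod A -> y \in A -> p.-elt y -> y ^+ p = 1.
Proof.
move=> p_pr /andP[abA /allP abelemA] Ay p_y.
have Op_y : y \in 'O_p(A).
  by rewrite (mem_normal_Hall (nilpotent_pcore_Hall p (abelian_nil abA))) ?pcore_normal.
have [pA | p'A] := boolP (p \in primes #|A|).
  by have := abelemA p pA; rewrite abelemE // => /andP[_ /exponentP]; apply.
have Op1 : 'O_p(A) = 1.
  apply/eqP; rewrite trivg_card1; apply/eqP; apply: (pnat_1 (pcore_pgroup p A)).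
  rewrite (pnat_dvd (cardSg (pcore_sub p A))) // p'natE //.
  by move: p'A; rewrite mem_primes p_pr cardG_gt0.
by move: Op_y; rewrite Op1 => /set1P ->; rewrite expg1n.
Qed.

End ElementaryProducts.

Section SecondTerm.
Variables (gT : finGroupType) (G : {group gT}).

Let nu1E : nu G 1 = (\bigcap_(N : {group gT} | nu_ok 'F(G)%G 'F(G)%G N) N)%G.
Proof. by []. Qed.

Lemma Fitting_comm_sub_nu1 : [~: 'F(G), 'F(G)] \subset nu G 1.
Proof. by rewrite nu1E; apply/bigcapsP => N /and4P[]. Qed.

Lemma pcore_Fitting_expn_nu1 (p : nat) (x : gT) :
  prime p -> x \in 'O_p('F(G)) -> x ^+ p \in nu G 1.
Proof.
move=> p_pr Op_x; rewrite nu1E; apply/bigcapP => N /and4P[nsNF _ _ elemFN].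
have Fx : x \in 'F(G) := subsetP (pcore_sub p _) x Op_x.
have nNx : x \in 'N(N) := subsetP (normal_norm nsNF) x Fx.
apply: coset_idr; first by rewrite groupX.
rewrite morphX //; apply: (@elem_prod_pelt_expn _ ('F(G) / N)%G p _ p_pr elemFN).
  exact: mem_quotient.
exact: morph_p_elt nNx (mem_p_elt (pcore_pgroup p _) Op_x).
Qed.

Lemma elem_prod_Fitting_nu1 : nu G 1 = 1%G -> elem_prod 'F(G).
Proof.
move=> nu1_triv.
have abF : abelian 'F(G).
  by apply/commG1P/trivgP; rewrite -[1]/(gval 1%G) -nu1_triv Fitting_comm_sub_nu1.
rewrite /elem_prod abF; apply/allP => p; rewrite mem_primes => /andP[p_pr _].
rewrite abelemE // (abelianS (pcore_sub p _) abF); apply/exponentP => x Op_x.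
by apply/set1P; rewrite -[[set 1]]/(gval 1%G) -nu1_triv pcore_Fitting_expn_nu1.
Qed.

Lemma Frank_Fclass1 : Fclass G 1 -> Frank G = #|'F(G)|.
Proof. by case=> nu1_triv _; rewrite /Frank nu1_triv indexg1. Qed.

End SecondTerm.

Section FittingSubgroup.
Variable gT : finGroupType.

Lemma nu_Fitting_eq (G H : {group gT}) :
  'F(H) = 'F(G) -> forall i, nu H i = nu G i.
Proof.
move=> eqF; have eqFG : 'F(H)%G = 'F(G)%G by apply: val_inj.
by elim=> [|i IHi] //=; rewrite eqFG IHi.
Qed.

Lemma Fclass_Frank_Fitting_eq (G H : {group gT}) (c : nat) :
  'F(H) = 'F(G) -> (Fclass H c <-> Fclass G c) /\ Frank H = Frank G.
Proof.
move/nu_Fitting_eq => eq_nu; rewrite /Fclass /Frank !eq_nu; split=> //.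
by split=> -[nu_c ntr]; split=> // j; [rewrite -eq_nu | rewrite eq_nu]; apply: ntr.
Qed.

Lemma Fitting_normal_over (G H : {group gT}) :
  H <| G -> 'F(G) \subset H -> 'F(H) = 'F(G).
Proof.
move=> nsHG sFH; apply/eqP; rewrite eqEsubset.
rewrite Fitting_max ?gFnormal_trans ?Fitting_nil //=.
by rewrite Fitting_max ?Fitting_nil ?(normalS sFH (normal_sub nsHG) (Fitting_normal G)).
Qed.

(* A normal subgroup K of H centralizing F(H) whose derived subgroup lies in
   F(H) is nilpotent of class at most 2, hence contained in F(H). *)
Lemma cent_Fitting_der1_sub (H K : {group gT}) :
  K <| H -> K \subset 'C('F(H)) -> K^`(1) \subset 'F(H) -> K \subset 'F(H).
Proof.
move=> nsKH cKF sK'F; apply: Fitting_max nsKH _.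
apply: small_nil_class; apply: leq_trans (_ : 2 <= 5) => //.
rewrite nil_class2 subsetI der_sub centsC.
exact: subset_trans (centS sK'F).
Qed.

(* In a solvable group the Fitting subgroup contains its centralizer: descend
   the derived series of C = C_H(F(H)) from the trivial term, using the
   previous lemma at each step. *)
Lemma solvable_cent_Fitting_sub (H : {group gT}) :
  solvable H -> 'C_H('F(H)) \subset 'F(H).
Proof.
move=> solH; set C := 'C_H('F(H)).
have nsCH : C <| H.
  by have := subcent_normal H 'F(H); rewrite (setIidPl (gFnorm _ _)).
have /derivedP[n Cn1] : solvable C := solvableS (subsetIl _ _) solH.
suff derC_sub k : k <= n -> C^`(n - k) \subset 'F(H) by have := derC_sub n; rewrite subnn; apply.
elim: k => [|k IHk] lt_kn; first by rewrite subn0 Cn1 sub1G.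
apply: cent_Fitting_der1_sub; first exact: char_normal_trans (der_char _ _) nsCH.
  by rewrite (subset_trans (der_sub _ _)) ?subsetIr.
by rewrite derg1 -dergSn subnSK // IHk // ltnW.
Qed.

End FittingSubgroup.

Unset Implicit Arguments.

Theorem lemma3p1 (gT : finGroupType) (G H : {group gT}) (l : nat) :
  Fclass G 1 -> Frank G = l ->
  H <| G -> solvable H ->
  (forall K : {group gT}, K <| G -> solvable K -> K \subset H) ->
  (elem_prod 'F(G) /\ #|'F(G)| = l) /\
  (solvable H /\ Fclass H 1 /\ Frank H = l /\ 'F(G) = 'F(H)) /\
  'C_H('F(H)) = 'F(H).
Proof.
move=> FclassG rankG nsHG solH maxH.
have elemF : elem_prod 'F(G) by case: FclassG => nu1_triv _; exact: elem_prod_Fitting_nu1.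
have sFH : 'F(G) \subset H.
  by apply: maxH; rewrite ?Fitting_normal ?nilpotent_sol ?Fitting_nil.
have eqF := Fitting_normal_over nsHG sFH.
have [[_ FclassH] rankH] := Fclass_Frank_Fitting_eq 1 eqF.
split; first by split; rewrite // -rankG Frank_Fclass1.
split; first by split=> //; split; [apply/FclassH | rewrite rankH eqF].
apply/eqP; rewrite eqEsubset solvable_cent_Fitting_sub //= subsetI Fitting_sub eqF.
by case/andP: elemF.
Qed.
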